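(* Let $\mathbb X=\langle\omega_1,\rho\rangle$ and $\mathbb Y=\langle\omega_1,\sigma\rangle$, where $\rho$ is the equivalence relation with classes $2=\{0,1\}$, $\omega\setminus2$, and $\{\alpha\}$ for $\omega\le\alpha<\omega_1$; and $\sigma$ is the equivalence relation with classes $\{n\}$ for $n\in\omega$ and $\omega_1\setminus\omega$. Then $\mathbb X\equiv_{\mathcal P_{\infty\omega}}\mathbb Y$, $\mathbb X\not\equiv\mathbb Y$, and $\mathbb X\not\sim_c\mathbb Y$.
   Context: The language has one binary relation symbol $R$. A condensation from $\langle X,\rho\rangle$ onto $\langle Y,\sigma\rangle$ is a bijection $F:X\to Y$ with $x\,\rho\,x'\Rightarrow F(x)\,\sigma\,F(x')$; $\mathbb X\sim_c\mathbb Y$ means condensations exist in both directions. $\equiv$ is first order elementary equivalence. $\mathcal P_0$ consists of all atomic formulas ($v_\alpha=v_\beta$, $R(v_\alpha,v_\beta)$) and all $\neg\,v_\alpha=v_\beta$; $\mathcal P_{\infty\omega}$ is the closure of $\mathcal P_0$ under $\forall v$, $\exists v$ and conjunctions and disjunctions of arbitrary sets of formulas (no negation); $\equiv_{\mathcal P_{\infty\omega}}$ means satisfying the same $\mathcal P_{\infty\omega}$-sentences. *)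

From Stdlib Require Import Arith PeanoNat.

Record structure : Type := Str { carrier : Type; rel : carrier -> carrier -> Prop }.

Definition upd {A : Type} (env : nat -> A) (i : nat) (a : A) : nat -> A :=
  fun j => if Nat.eqb j i then a else env j.

Inductive fo : Type :=
| FEq  : nat -> nat -> fo
| FR   : nat -> nat -> fo
| FNot : fo -> fo
| FAnd : fo -> fo -> fo
| FOr  : fo -> fo -> fo
| FAll : nat -> fo -> fo
| FEx  : nat -> fo -> fo.

Fixpoint fo_free (k : nat) (p : fo) : Prop :=
  match p with
  | FEq i j | FR i j => k = i \/ k = j
  | FNot q => fo_free k q
  | FAnd q r | FOr q r => fo_free k q \/ fo_free k r
  | FAll i q | FEx i q => k <> i /\ fo_free k q
  end.

Definition fo_sentence (p : fo) : Prop := forall k, ~ fo_free k p.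

Fixpoint fo_sat (M : structure) (env : nat -> carrier M) (p : fo) : Prop :=
  match p with
  | FEq i j => env i = env j
  | FR i j => rel M (env i) (env j)
  | FNot q => ~ fo_sat M env q
  | FAnd q r => fo_sat M env q /\ fo_sat M env r
  | FOr q r => fo_sat M env q \/ fo_sat M env r
  | FAll i q => forall a, fo_sat M (upd env i a) q
  | FEx i q => exists a, fo_sat M (upd env i a) q
  end.

Definition fo_models (M : structure) (p : fo) : Prop :=
  forall env : nat -> carrier M, fo_sat M env p.

Definition elem_equiv (M N : structure) : Prop :=
  forall p, fo_sentence p -> (fo_models M p <-> fo_models N p).

Inductive pinf : Type :=
| PEq  : nat -> nat -> pinf
| PNeq : nat -> nat -> pinf
| PR   : nat -> nat -> pinf
| PAll : nat -> pinf -> pinf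
| PEx  : nat -> pinf -> pinf
| PAnd : forall I : Type, (I -> pinf) -> pinf
| POr  : forall I : Type, (I -> pinf) -> pinf.

Fixpoint p_free (k : nat) (p : pinf) : Prop :=
  match p with
  | PEq i j | PNeq i j | PR i j => k = i \/ k = j
  | PAll i q | PEx i q => k <> i /\ p_free k q
  | PAnd J f | POr J f => exists x : J, p_free k (f x)
  end.

Definition p_sentence (p : pinf) : Prop := forall k, ~ p_free k p.

Fixpoint p_sat (M : structure) (env : nat -> carrier M) (p : pinf) : Prop :=
  match p with
  | PEq i j => env i = env j
  | PNeq i j => env i <> env j
  | PR i j => rel M (env i) (env j)
  | PAll i q => forall a, p_sat M (upd env i a) q
  | PEx i q => exists a, p_sat M (upd env i a) q
  | PAnd J f => forall x : J, p_sat M env (f x)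
  | POr J f => exists x : J, p_sat M env (f x)
  end.

Definition p_models (M : structure) (p : pinf) : Prop :=
  forall env : nat -> carrier M, p_sat M env p.

Definition pinf_equiv (M N : structure) : Prop :=
  forall p, p_sentence p -> (p_models M p <-> p_models N p).

Definition bijective_map {A B : Type} (F : A -> B) : Prop :=
  (forall x y, F x = F y -> x = y) /\ (forall b, exists a, F a = b).

Definition condensation (M N : structure) (F : carrier M -> carrier N) : Prop :=
  bijective_map F /\ forall x x', rel M x x' -> rel N (F x) (F x').

Definition cond_equiv (M N : structure) : Prop :=
  (exists F, condensation M N F) /\ (exists G, condensation N M G).

(** [is_omega1 W lt]: (W, lt) is a strict well-order that is uncountable while
    every proper initial segment is countable, i.e. (W,lt) is order-isomorphic
    to omega_1. *)
Definition countable_type (A : Type) : Prop :=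
  exists f : A -> nat, forall x y, f x = f y -> x = y.

Definition is_omega1 (W : Type) (lt : W -> W -> Prop) : Prop :=
  (forall x, ~ lt x x) /\
  (forall x y z, lt x y -> lt y z -> lt x z) /\
  (forall x y, lt x y \/ x = y \/ lt y x) /\
  well_founded lt /\
  ~ countable_type W /\
  (forall a, countable_type {x : W | lt x a}).

(** [e] identifies omega with the initial segment omega of W: e is strictly
    increasing and its range is downward closed; so e n is the n-th element. *)
Definition omega_embedding (W : Type) (lt : W -> W -> Prop) (e : nat -> W) : Prop :=
  (forall n, lt (e n) (e (S n))) /\
  (forall w n, lt w (e n) -> exists m, w = e m).

Definition in_omega {W : Type} (e : nat -> W) (x : W) : Prop := exists n, x = e n.

Definition rhoX {W : Type} (e : nat -> W) (x y : W) : Prop :=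
  (exists m n, m < 2 /\ n < 2 /\ x = e m /\ y = e n) \/
  (exists m n, 2 <= m /\ 2 <= n /\ x = e m /\ y = e n) \/
  (~ in_omega e x /\ x = y).

Definition sigmaY {W : Type} (e : nat -> W) (x y : W) : Prop :=
  (in_omega e x /\ x = y) \/ (~ in_omega e x /\ ~ in_omega e y).

(* Both structures are equivalence relations on omega_1, and a positive formula
   can never assert that two elements are unrelated; it is therefore preserved
   by any back-and-forth system of finite partial injections that send related
   pairs to related pairs.  From X to Y such a system sends omega into the
   uncountable sigma-class; from Y to X it sends the uncountable sigma-class
   into omega \ 2; all other points go to fresh points of the same kind.  The
   first-order sentence "some class has exactly two elements" holds in X but
   not in Y, and a condensation of Y onto X would inject the uncountable
   sigma-class into a single, countable, rho-class. *)

From Stdlib Require Import Arith PeanoNat Lia List Classical ClassicalEpsilon.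
Import ListNotations.

Section Matching.

Context {A B : Type} (U : A -> B -> Prop).

(* The variables in [L] are assigned by [f] and [g] so that [k |-> (f k, g k)]
   is a well-defined injective partial map contained in [U]. *)
Definition matching (L : list nat) (f : nat -> A) (g : nat -> B) : Prop :=
  (forall k k', In k L -> In k' L -> (f k = f k' <-> g k = g k')) /\
  (forall k, In k L -> U (f k) (g k)).

Lemma matching_nil (f : nat -> A) (g : nat -> B) : matching [] f g.
Proof. split; intros; contradiction. Qed.

Lemma matching_upd L f g i a b :
  matching L f g -> U a b ->
  (forall k, In k L -> k <> i -> (a = f k <-> b = g k)) ->
  matching (i :: L) (upd f i a) (upd g i b).
Proof.
  intros [Hinj HU] Hab Hnew; unfold upd; split.
  - intros k k' Hk Hk'.
    destruct (Nat.eqb_spec k i) as [->|Hki]; destruct (Nat.eqb_spec k' i) as [->|Hk'i].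
    + tauto.
    + destruct Hk' as [->|Hk']; [congruence|]. auto.
    + destruct Hk as [->|Hk]; [congruence|].
      specialize (Hnew k Hk Hki). split; intro E; symmetry; apply Hnew; auto.
    + destruct Hk as [->|Hk]; [congruence|]. destruct Hk' as [->|Hk']; [congruence|]. auto.
  - intros k Hk. destruct (Nat.eqb_spec k i) as [->|Hki]; [assumption|].
    destruct Hk as [->|Hk]; [congruence|]. auto.
Qed.

Lemma matching_forth L f g i a :
  matching L f g -> (forall l, exists b, U a b /\ ~ In b l) ->
  exists b, matching (i :: L) (upd f i a) (upd g i b).
Proof.
  intros HM Hfresh.
  destruct (classic (exists k, In k L /\ k <> i /\ f k = a)) as [[k [Hk [Hki <-]]]|Hold].
  - exists (g k). apply matching_upd; [exact HM|apply (proj2 HM); exact Hk|].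
    intros k' Hk' _. apply (proj1 HM); assumption.
  - destruct (Hfresh (map g L)) as [b [Hab Hb]]. exists b.
    apply matching_upd; [exact HM|exact Hab|].
    intros k Hk Hki; split; intros ->.
    + exfalso; apply Hold; eauto.
    + exfalso; apply Hb, in_map, Hk.
Qed.

End Matching.

Lemma matching_flip {A B : Type} (U : A -> B -> Prop) L f g :
  matching U L f g -> matching (fun b a => U a b) L g f.
Proof.
  intros [Hinj HU]; split; [|exact HU].
  intros k k' Hk Hk'; symmetry; auto.
Qed.

Lemma matching_back {A B : Type} (U : A -> B -> Prop) L f g i b :
  matching U L f g -> (forall l, exists a, U a b /\ ~ In a l) ->
  exists a, matching U (i :: L) (upd f i a) (upd g i b).
Proof.
  intros HM Hfresh.
  destruct (matching_forth (fun b a => U a b) L g f i b (matching_flip U L f g HM) Hfresh)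
    as [a Ha].
  exists a. exact (matching_flip _ _ _ _ Ha).
Qed.

Section PositiveTransfer.

Variables (M N : structure) (U : carrier M -> carrier N -> Prop).

Hypothesis U_rel : forall a a' b b',
  U a b -> U a' b' -> a <> a' -> rel M a a' -> rel N b b'.
Hypothesis rel_N_refl : forall b, rel N b b.
Hypothesis U_forth : forall a l, exists b, U a b /\ ~ In b l.
Hypothesis U_back : forall b l, exists a, U a b /\ ~ In a l.

Lemma matching_rel L f g i j :
  matching U L f g -> In i L -> In j L -> rel M (f i) (f j) -> rel N (g i) (g j).
Proof.
  intros [Hinj HU] Hi Hj Hr.
  destruct (classic (f i = f j)) as [E|Hne].
  - apply Hinj in E; [|assumption|assumption]. rewrite E. apply rel_N_refl.
  - exact (U_rel _ _ _ _ (HU i Hi) (HU j Hj) Hne Hr).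
Qed.

Lemma free_under_binder (P : nat -> Prop) L i :
  (forall k, k <> i /\ P k -> In k L) -> forall k, P k -> In k (i :: L).
Proof.
  intros HL k Hk. destruct (Nat.eq_dec k i) as [->|Hki]; [left; reflexivity|].
  right; apply HL; auto.
Qed.

Lemma p_sat_transfer p : forall L f g,
  (forall k, p_free k p -> In k L) -> matching U L f g -> p_sat M f p -> p_sat N g p.
Proof.
  induction p as [i j|i j|i j|i q IH|i q IH|I h IH|I h IH];
    intros L f g HL HM Hsat; simpl in *.
  - apply (proj1 HM); auto.
  - intro E; apply Hsat, (proj1 HM); auto.
  - apply (matching_rel L f); auto.
  - intro b. destruct (matching_back U L f g i b HM (U_back b)) as [a Ha].
    exact (IH (i :: L) _ _ (free_under_binder _ L i HL) Ha (Hsat a)).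
  - destruct Hsat as [a Ha]. destruct (matching_forth U L f g i a HM (U_forth a)) as [b Hb].
    exists b. exact (IH (i :: L) _ _ (free_under_binder _ L i HL) Hb Ha).
  - intro x. apply (IH x L f); eauto.
  - destruct Hsat as [x Hx]. exists x. apply (IH x L f); eauto.
Qed.

Lemma p_models_transfer p : p_sentence p -> p_models M p -> p_models N p.
Proof.
  intros Hp HMp g.
  destruct (U_back (g 0) []) as [a _].
  apply (p_sat_transfer p [] (fun _ => a) g).
  - intros k Hk; contradiction (Hp k Hk).
  - apply matching_nil.
  - apply HMp.
Qed.

End PositiveTransfer.

Lemma increasing_seq_injective {A : Type} (lt : A -> A -> Prop) (s : nat -> A) :
  (forall x, ~ lt x x) -> (forall x y z, lt x y -> lt y z -> lt x z) ->
  (forall n, lt (s n) (s (S n))) -> forall m n, s m = s n -> m = n.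
Proof.
  intros Hirr Htrans Hinc.
  assert (Hmono : forall m n, m < n -> lt (s m) (s n)).
  { intros m n Hmn; induction Hmn; eauto. }
  intros m n E.
  destruct (Nat.lt_trichotomy m n) as [H|[H|H]]; [|exact H|];
    apply Hmono in H; rewrite E in H; contradiction (Hirr _ H).
Qed.

Lemma injective_seq_eventually_avoids {A : Type} (s : nat -> A) :
  (forall m n, s m = s n -> m = n) ->
  forall l : list A, exists N, forall m, N <= m -> ~ In (s m) l.
Proof.
  intros Hinj; induction l as [|x l [N HN]].
  - exists 0; intros m _ H; exact H.
  - destruct (classic (exists n, x = s n)) as [[n ->]|Hx].
    + exists (max N (S n)). intros m Hm [H|H].
      * apply Hinj in H; lia.
      * apply (HN m); [lia|exact H].
    + exists N. intros m Hm [H|H]; [apply Hx; eauto|exact (HN m Hm H)].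
Qed.

Lemma countable_of_cover2 {A : Type} (s t : nat -> A) :
  (forall x, (exists n, x = s n) \/ (exists n, x = t n)) -> countable_type A.
Proof.
  intros Hcov.
  set (u n := if Nat.even n then s (Nat.div2 n) else t (Nat.div2 n)).
  assert (Hu : forall x, exists n, u n = x).
  { intros x. destruct (Hcov x) as [[n ->]|[n ->]].
    - exists (2 * n). unfold u. rewrite Nat.even_even, Nat.div2_double. reflexivity.
    - exists (2 * n + 1). unfold u. rewrite Nat.even_odd, Nat.add_1_r, Nat.div2_succ_double.
      reflexivity. }
  destruct (choice _ Hu) as [code Hcode].
  exists code. intros x y E. rewrite <- (Hcode x), <- (Hcode y), E. reflexivity.
Qed.

Lemma uncountable_avoids {A : Type} :
  ~ countable_type A -> forall (s : nat -> A) (l : list A),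
  exists z, (forall n, z <> s n) /\ ~ In z l.
Proof.
  intros Hunc s l. apply NNPP; intro Hno. apply Hunc.
  apply (countable_of_cover2 s (fun n => nth n l (s 0))). intros x.
  destruct (classic (exists n, x = s n)) as [Hs|Hs]; [left; exact Hs|right].
  assert (Hx : In x l).
  { apply NNPP; intro Hx. apply Hno. exists x. split; [|exact Hx].
    intros n ->; apply Hs; eauto. }
  destruct (In_nth l x (s 0) Hx) as [n [_ Hn]]. eauto.
Qed.

Section RhoSigma.

Variables (W : Type) (lt : W -> W -> Prop) (e : nat -> W).
Hypothesis HW : is_omega1 W lt.
Hypothesis He : omega_embedding W lt e.

Local Notation X := (Str W (rhoX e)).
Local Notation Y := (Str W (sigmaY e)).

Lemma e_injective m n : e m = e n -> m = n.
Proof.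
  destruct HW as [Hirr [Htrans _]].
  exact (increasing_seq_injective lt e Hirr Htrans (proj1 He) m n).
Qed.

Lemma fresh_omega_ge2 (l : list W) : exists m, 2 <= m /\ ~ In (e m) l.
Proof.
  destruct (injective_seq_eventually_avoids e e_injective l) as [N HN].
  exists (max N 2). split; [lia|]. apply HN; lia.
Qed.

Lemma fresh_non_omega (l : list W) : exists z, ~ in_omega e z /\ ~ In z l.
Proof.
  destruct HW as [_ [_ [_ [_ [Hunc _]]]]].
  destruct (uncountable_avoids Hunc e l) as [z [Hz Hl]].
  exists z. split; [intros [n En]; exact (Hz n En)|exact Hl].
Qed.

Lemma rhoX_refl x : rhoX e x x.
Proof.
  destruct (classic (in_omega e x)) as [[n ->]|Hx].
  - destruct (Nat.lt_ge_cases n 2).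
    + left; exists n, n; auto.
    + right; left; exists n, n; auto.
  - right; right; auto.
Qed.

Lemma sigmaY_refl x : sigmaY e x x.
Proof. destruct (classic (in_omega e x)); [left|right]; auto. Qed.

Lemma p_models_rho_sigma p : p_sentence p -> p_models X p -> p_models Y p.
Proof.
  apply (p_models_transfer X Y (fun a b => in_omega e a -> ~ in_omega e b)); simpl.
  - intros a a' b b' Hab Ha'b' Hne
      [[m [n [_ [_ [-> ->]]]]]|[[m [n [_ [_ [-> ->]]]]]|[_ E]]].
    + right; split; [apply Hab|apply Ha'b']; eexists; reflexivity.
    + right; split; [apply Hab|apply Ha'b']; eexists; reflexivity.
    + contradiction.
  - exact sigmaY_refl.
  - intros a l. destruct (fresh_non_omega l) as [z [Hz Hl]]. eauto.
  - intros b l. destruct (fresh_non_omega l) as [z [Hz Hl]].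
    exists z; split; [intro H; contradiction|exact Hl].
Qed.

Lemma p_models_sigma_rho p : p_sentence p -> p_models Y p -> p_models X p.
Proof.
  apply (p_models_transfer Y X
           (fun a b => ~ in_omega e a -> exists m, 2 <= m /\ b = e m)); simpl.
  - intros a a' b b' Hab Ha'b' Hne [[_ E]|[Ha Ha']]; [contradiction|].
    destruct (Hab Ha) as [m [Hm ->]]. destruct (Ha'b' Ha') as [n [Hn ->]].
    right; left; exists m, n; auto.
  - exact rhoX_refl.
  - intros a l. destruct (fresh_omega_ge2 l) as [m [Hm Hl]]. eauto.
  - intros b l. destruct (fresh_omega_ge2 l) as [m [_ Hl]].
    exists (e m); split; [intro H; contradiction H; eexists; reflexivity|exact Hl].
Qed.

Definition two_element_class : fo :=
  FEx 0 (FEx 1 (FAnd (FNot (FEq 0 1)) (FAnd (FR 0 1)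
    (FAll 2 (FOr (FNot (FR 0 2)) (FOr (FEq 2 0) (FEq 2 1))))))).

Lemma two_element_class_sentence : fo_sentence two_element_class.
Proof. intros k H. simpl in H. lia. Qed.

Lemma fo_sat_two_element_class (M : structure) env :
  fo_sat M env two_element_class <->
  exists x y, x <> y /\ rel M x y /\ forall z, ~ rel M x z \/ z = x \/ z = y.
Proof. reflexivity. Qed.

Lemma not_elem_equiv_rho_sigma : ~ elem_equiv X Y.
Proof.
  intros Heq.
  assert (HX : fo_models X two_element_class).
  { intros env. apply fo_sat_two_element_class. exists (e 0), (e 1). split; [|split].
    - intro E; apply e_injective in E; discriminate.
    - left; exists 0, 1; auto.
    - intro z. destruct (classic (rhoX e (e 0) z)) as [Hz|Hz]; [right|left; exact Hz].
      destruct Hz as [[m [n [_ [Hn [_ ->]]]]]|[[m [n [Hm [_ [E _]]]]]|[H0 _]]].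
      + destruct n as [|[|n]]; [left|right|lia]; reflexivity.
      + apply e_injective in E; lia.
      + contradiction H0; exists 0; reflexivity. }
  apply (proj1 (Heq _ two_element_class_sentence)) in HX.
  destruct (proj1 (fo_sat_two_element_class Y (fun _ => e 0)) (HX _))
    as [x [y [Hne [[[_ E]|[Hx Hy]] Hclass]]]]; [contradiction|].
  destruct (fresh_non_omega [x; y]) as [z [Hz Hl]].
  destruct (Hclass z) as [H|[-> | ->]].
  - apply H; right; auto.
  - apply Hl; left; reflexivity.
  - apply Hl; right; left; reflexivity.
Qed.

Lemma no_condensation_sigma_rho : ~ exists G, condensation Y X G.
Proof.
  intros [G [[Ginj Gsurj] Grel]]; simpl in *.
  destruct (choice _ Gsurj) as [Ginv HGinv].
  destruct (fresh_non_omega []) as [b0 [Hb0 _]].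
  destruct HW as [_ [_ [_ [_ [Hunc _]]]]]. apply Hunc.
  apply (countable_of_cover2 e (fun n => match n with 0 => b0 | S k => Ginv (e k) end)).
  intros x. destruct (classic (in_omega e x)) as [Hx|Hx]; [left; exact Hx|right].
  assert (Hr : rhoX e (G x) (G b0)) by (apply Grel; right; auto).
  assert (Hpre : forall k, G x = e k -> exists n, x = Ginv (e n)).
  { intros k E. exists k. apply Ginj. rewrite HGinv. exact E. }
  destruct Hr as [[m [_ [_ [_ [E _]]]]]|[[m [_ [_ [_ [E _]]]]]|[_ E]]].
  - destruct (Hpre m E) as [n ->]. exists (S n); reflexivity.
  - destruct (Hpre m E) as [n ->]. exists (S n); reflexivity.
  - exists 0. apply Ginj, E.
Qed.

End RhoSigma.

Theorem mainTheorem17 (W : Type) (lt : W -> W -> Prop) (e : nat -> W)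
  (HW : is_omega1 W lt) (He : omega_embedding W lt e) :
  pinf_equiv (Str W (rhoX e)) (Str W (sigmaY e)) /\
  ~ elem_equiv (Str W (rhoX e)) (Str W (sigmaY e)) /\
  ~ cond_equiv (Str W (rhoX e)) (Str W (sigmaY e)).
Proof.
  split; [|split].
  - intros p Hp; split.
    + exact (p_models_rho_sigma W lt e HW p Hp).
    + exact (p_models_sigma_rho W lt e HW He p Hp).
  - exact (not_elem_equiv_rho_sigma W lt e HW He).
  - intros [_ HYX]. exact (no_condensation_sigma_rho W lt e HW HYX).
Qed.
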